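(* Let $n\ge 5$ be an integer with $n\equiv 1\pmod 4$, let $\Delta_n(u,v)=(n-1)^{n-1}u^n+n^nv^{n-1}$, and let $\ell$ be an odd prime. Define $$ S_n(\ell)=\sum_{u=1}^{\ell}\sum_{v=1}^{\ell}\left(\frac{\Delta_n(u,v)}{\ell}\right). $$ Then $|S_n(\ell)|\le c\,\ell$ for some constant $c>0$ depending only on $n$.
   Context: $\left(\frac{w}{\ell}\right)$ denotes the Legendre (Jacobi) symbol of $w$ modulo $\ell$. The polynomial $\Delta_n(u,v)$ is the discriminant of $t^n+ut+v$ when $n\equiv1\pmod4$. *)

From mathcomp Require Import all_boot all_order all_algebra.
Set Implicit Arguments. Unset Strict Implicit. Unset Printing Implicit Defensive.
Import Order.TTheory GRing.Theory Num.Theory.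
Local Open Scope ring_scope.

Definition legendre (w l : nat) : int :=
  if (l %| w)%N then 0
  else if [exists x : 'I_l, (x ^ 2 == w %[mod l])%N] then 1 else -1.

Definition Delta (n u v : nat) : nat :=
  ((n - 1) ^ (n - 1) * u ^ n + n ^ n * v ^ (n - 1))%N.

Definition S (n l : nat) : int :=
  \sum_(1 <= u < l.+1) \sum_(1 <= v < l.+1) legendre (Delta n u v) l.

From mathcomp Require Import all_boot all_order all_algebra.
From mathcomp Require Import ring zify.
Set Implicit Arguments. Unset Strict Implicit. Unset Printing Implicit Defensive.
Import Order.TTheory GRing.Theory Num.Theory.
Local Open Scope ring_scope.

(** Write [n = k + 1] with [k] even, [A = k^k], [B = n^n], and let [chi] be the
    quadratic character of [F_l], [l > n].  For [x != 0] the substitution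
    [y -> x y] gives [A x^(k+1) + B (x y)^k = x^k (A x + B y^k)], and [x^k] is a
    square, so row [x] of the double sum is [sum_y chi (A x + B y^k)].  Summing
    these rows over [x != 0] first, [A x + c] runs over [F_l \ {c}] and [chi]
    sums to [0] over [F_l], so they contribute [- sum_y chi (B y^k)].  With the
    row [x = 0] this gives [|S| <= 2 l]; for the finitely many [l <= n] the
    trivial bound [l^2 <= n l] suffices. *)

Section QuadraticCharacter.
Variable F : finFieldType.

Definition qchar (y : F) : int :=
  if y == 0 then 0 else if [exists x, x ^+ 2 == y] then 1 else -1.

Lemma qchar_norm_le1 y : `|qchar y| <= 1.
Proof. by rewrite /qchar; case: ifP => _ //; case: ifP. Qed.

Lemma qchar_sqrM s y : s != 0 -> qchar (s ^+ 2 * y) = qchar y.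
Proof.
move=> s0; rewrite /qchar mulf_eq0 expf_eq0 /= (negbTE s0) /=.
case: (y == 0) => //.
suff -> : [exists x, x ^+ 2 == s ^+ 2 * y] = [exists x, x ^+ 2 == y] by [].
apply/existsP/existsP => -[x /eqP hx].
  by exists (x / s); rewrite expr_div_n hx mulrC mulKf // expf_neq0.
by exists (s * x); rewrite exprMn hx.
Qed.

Lemma norm_sum_qchar_le (G : F -> F) : `|\sum_y qchar (G y)| <= #|F|%:R.
Proof.
apply: (le_trans (ler_norm_sum _ _ _)).
rewrite -[#|F|%:R]mul1r mulr_natr -sumr_const.
by apply: ler_sum => y _; exact: qchar_norm_le1.
Qed.

Hypothesis two_neq0 : (2%:R : F) != 0.

Let nonzero := [set x : F | x != 0].
Let nonzero_squares := [set x ^+ 2 | x in nonzero].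

Lemma card_sqr_eq_sqr s : s != 0 -> #|[set x in nonzero | x ^+ 2 == s ^+ 2]| = 2%N.
Proof.
move=> s0; have ->: [set x in nonzero | x ^+ 2 == s ^+ 2] = [set s; -s].
  apply/setP => x; rewrite !inE eqf_sqr.
  by case: (x =P 0) => [->|] //=; rewrite eq_sym [0 == _]eq_sym oppr_eq0 (negbTE s0).
rewrite cards2; suff -> : s != - s by [].
apply/negP => /eqP ss.
have : s * 2%:R == 0 by rewrite mulr_natr mulr2n {2}ss subrr.
by rewrite mulf_eq0 (negbTE s0) (negbTE two_neq0).
Qed.

Lemma card_nonzero_squares : #|nonzero| = (2 * #|nonzero_squares|)%N.
Proof.
rewrite -sum1_card (partition_big (fun x => x ^+ 2) (mem nonzero_squares)); last first.
  by move=> x xP; apply/imsetP; exists x.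
rewrite -[in RHS]sum1_card big_distrr /=.
apply: eq_bigr => q /imsetP [s]; rewrite inE => s0 ->.
by rewrite muln1 sum1dep_card card_sqr_eq_sqr.
Qed.

Lemma qchar_indicator y :
  qchar y = (if y \in nonzero_squares then 2 else 0) - (if y \in nonzero then 1 else 0).
Proof.
rewrite /qchar inE; case: eqP => [->|y0] /=.
  by case: imsetP => // -[x]; rewrite inE => x0 /esym/eqP; rewrite expf_eq0 (negbTE x0) andbF.
case: existsP => [[x /eqP xy]|nsq].
  suff -> : y \in nonzero_squares by [].
  apply/imsetP; exists x => //; rewrite inE; apply/eqP => x0; apply: y0.
  by rewrite -xy x0 expr0n.
suff -> : y \in nonzero_squares = false by [].
by apply/negbTE/imsetP => -[x _ xy]; apply: nsq; exists x; rewrite xy.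
Qed.

Lemma sum_qchar : \sum_y qchar y = 0.
Proof.
rewrite (eq_bigr _ (fun y _ => qchar_indicator y)) sumrB -!big_mkcond /=.
by rewrite !sumr_const card_nonzero_squares -mulrnA mulnC subrr.
Qed.

Lemma sum_qchar_affine_nonzero (A c : F) : A != 0 ->
  \sum_(x | x != 0) qchar (A * x + c) = - qchar c.
Proof.
move=> A0; have := sum_qchar.
rewrite (reindex_inj (fun a b (e : A * a + c = A * b + c) => mulfI A0 (addIr _ e))) /=.
by rewrite (bigD1 0) //= mulr0 add0r => /eqP; rewrite addr_eq0 => /eqP ->; rewrite opprK.
Qed.

(* Substitute [y -> x y]; [x^k] is a square as [k] is even. *)
Lemma sum_qchar_row_scale (k m : nat) (A B x : F) : k = (m * 2)%N -> x != 0 ->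
  \sum_y qchar (A * x ^+ k.+1 + B * y ^+ k) = \sum_y qchar (A * x + B * y ^+ k).
Proof.
move=> km x0; rewrite (reindex_inj (mulfI x0)) /=; apply: eq_bigr => y _.
have -> : A * x ^+ k.+1 + B * (x * y) ^+ k = (x ^+ m) ^+ 2 * (A * x + B * y ^+ k).
  by rewrite -exprM -km exprMn exprS; ring.
by rewrite qchar_sqrM // expf_neq0.
Qed.

Lemma norm_sum2_qchar_binomial_le (k m : nat) (A B : F) : k = (m * 2)%N -> A != 0 ->
  `|\sum_x \sum_y qchar (A * x ^+ k.+1 + B * y ^+ k)| <= (2 * #|F|)%:R.
Proof.
move=> km A0; rewrite (bigD1 0) //= mul2n -addnn natrD.
rewrite (le_trans (ler_normD _ _)) // lerD ?norm_sum_qchar_le //.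
rewrite (eq_bigr _ (fun x x0 => sum_qchar_row_scale A B km x0)) exchange_big /=.
rewrite (eq_bigr _ (fun y _ => sum_qchar_affine_nonzero (B * y ^+ k) A0)).
by rewrite sumrN normrN norm_sum_qchar_le.
Qed.

End QuadraticCharacter.

Lemma Fp_natr_val l (y : 'F_l) : prime l -> ((val y)%:R : 'F_l) = y.
Proof.
move=> pl; apply: val_inj; rewrite /= (val_Fp_nat pl) modn_small //.
by rewrite -[X in (_ < X)%N](Fp_cast pl) ltn_ord.
Qed.

Lemma legendre_qchar l w : prime l -> legendre w l = qchar (w%:R : 'F_l).
Proof.
move=> pl; rewrite /legendre /qchar.
have -> : (w%:R == 0 :> 'F_l) = (l %| w)%N by rewrite -val_eqE /= (val_Fp_nat pl).
case: (l %| w)%N => //.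
suff -> : [exists x : 'I_l, (x ^ 2 == w %[mod l])%N] = [exists x : 'F_l, x ^+ 2 == w%:R].
  by [].
apply/existsP/existsP => -[x xw].
  by exists (val x)%:R; rewrite -natrX -val_eqE /= !(val_Fp_nat pl).
have xl : (val x < l)%N by rewrite -[X in (_ < X)%N](Fp_cast pl) ltn_ord.
exists (Ordinal xl).
by rewrite -(Fp_natr_val x pl) -natrX -val_eqE /= !(val_Fp_nat pl) in xw.
Qed.

(* [u = l] plays the role of [0] in [F_l]. *)
Lemma sum_nat_Fp l (g : 'F_l -> int) : prime l ->
  \sum_(1 <= u < l.+1) g u%:R = \sum_(x : 'F_l) g x.
Proof.
move=> pl; have l0 := prime_gt0 pl.
have e : \sum_(0 <= u < l.+1) g u%:R = g 0 + \sum_(1 <= u < l.+1) g u%:R.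
  by rewrite big_ltn.
rewrite big_nat_recr //= pchar_Fp_0 // addrC in e; rewrite -(addrI _ e).
transitivity (\sum_(0 <= u < (Zp_trunc (pdiv l)).+2) g u%:R).
  by rewrite (Fp_cast pl).
by rewrite big_mkord; apply: eq_bigr => x _; rewrite Fp_natr_val.
Qed.

Lemma legendre_norm_le1 w l : `|legendre w l| <= 1.
Proof. by rewrite /legendre; case: ifP => _ //; case: ifP. Qed.

Lemma S_norm_le_sqr n l : `|S n l| <= (l * l)%N%:Z.
Proof.
apply: (le_trans (ler_norm_sum _ _ _)).
apply: (@le_trans _ _ (\sum_(1 <= u < l.+1) l%:Z)).
  apply: ler_sum_nat => u _; apply: (le_trans (ler_norm_sum _ _ _)).
  apply: (@le_trans _ _ (\sum_(1 <= v < l.+1) 1)).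
    by apply: ler_sum_nat => v _; exact: legendre_norm_le1.
  by rewrite sumr_const_nat subn1 natz.
by rewrite sumr_const_nat subn1 -mulr_natr natz PoszM.
Qed.

Lemma S_norm_le_large_prime n l : prime l -> (2 < l)%N -> (n < l)%N -> odd n ->
  `|S n l| <= (2 * l)%N%:Z.
Proof.
case: n => [//|k] pl l2 kl; rewrite /= => /negbTE ek.
pose A : 'F_l := (k ^ k)%:R; pose B : 'F_l := (k.+1 ^ k.+1)%:R.
have -> : S k.+1 l = \sum_(x : 'F_l) \sum_(y : 'F_l) qchar (A * x ^+ k.+1 + B * y ^+ k).
  rewrite /S -(sum_nat_Fp (fun x => \sum_y qchar (A * x ^+ k.+1 + B * y ^+ k)) pl).
  apply: eq_bigr => u _; rewrite -(sum_nat_Fp (fun y => qchar (A * u%:R ^+ k.+1 + B * y ^+ k)) pl).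
  apply: eq_bigr => v _.
  by rewrite legendre_qchar // /Delta /A /B subn1 /= natrD !natrM !natrX.
rewrite -[X in (2 * X)%N](card_Fp pl) -natz.
have two_neq0 : (2%:R : 'F_l) != 0.
  by rewrite -val_eqE /= (Fp_cast pl) !modn_small //; lia.
apply: (norm_sum2_qchar_binomial_le two_neq0 (m := k./2)).
- by rewrite -{1}(odd_double_half k) ek add0n -mul2n mulnC.
- rewrite -val_eqE /= (val_Fp_nat pl) -/(dvdn l _) (Euclid_dvdX _ _ pl).
  by apply/negP => /andP [lk k0]; have := dvdn_leq k0 lk; lia.
Qed.

Theorem lemma1 (n : nat) (hn5 : (5 <= n)%N) (hn1 : n = 1 %[mod 4]) :
  exists c : rat, 0 < c /\
    forall l : nat, prime l -> odd l ->
      `|S n l|%:~R <= c * l%:R.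
Proof.
exists n%:R; split; first by rewrite ltr0n (leq_trans _ hn5).
move=> l pl ol; rewrite -natrM -[_%:R]/((n * l)%N%:Z)%:~R ler_int.
have [ln|nl] := leqP l n.
  by apply: (le_trans (S_norm_le_sqr n l)); rewrite lez_nat leq_mul2r ln orbT.
have odd_n : odd n.
  by have := modn_dvdm n (isT : (2 %| 4)%N); rewrite hn1 !modn2; case: (odd n).
apply: (le_trans (S_norm_le_large_prime pl (odd_prime_gt2 ol pl) nl odd_n)).
by rewrite lez_nat leq_mul2r (leq_trans _ hn5) ?orbT.
Qed.
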